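(* A partial order is unary FA-presentable if and only if it is isomorphic to one obtained by propagating a unary FA-foundational partial order $(Q,\le)$ in which every seed $P_k=\{p^{(k)}_1,\dots,p^{(k)}_5\}$ is either an anti-chain (no two distinct $p^{(k)}_i$ comparable), an ascending chain ($p^{(k)}_1<p^{(k)}_2<p^{(k)}_3<p^{(k)}_4<p^{(k)}_5$), or a descending chain ($p^{(k)}_1>p^{(k)}_2>p^{(k)}_3>p^{(k)}_4>p^{(k)}_5$).
   Context: A structure is unary FA-presentable if there exist a regular language $L\subseteq a^*$ and a surjection $\phi:L\to X$ such that for equality and for the relation, the set of pairs $(u,v)\in L^2$ whose images are related is regular (i.e. the set of words $\mathrm{conv}(u,v)$ over $\{a,\$\}^2$, reading both words in parallel with the shorter padded by $\$$, is a regular language). A unary FA-foundational binary relation is a finite set $Q$ with a relation $\rho$ and pairwise disjoint five-element subsets (seeds) $P_k=\{p^{(k)}_1,\dots,p^{(k)}_5\}$, $0\le k\le n-1$ ($n\ge0$), such that with $Q'=Q\setminus\bigcup_k P_k$, for all $k,l$ (possibly equal) and $q\in Q'$: (1) the statements $p^{(k)}_i\rho p^{(l)}_i$ ($1\le i\le5$) are all true or all false; (2) the statements $p^{(k)}_i\rho p^{(l)}_{i+1}$ ($1\le i\le4$) are all true or all false; (3) the statements $p^{(k)}_{i+1}\rho p^{(l)}_i$ ($1\le i\le 4$) are all true or all false; (4) the statements $p^{(k)}_i\rho p^{(l)}_j$ with $j-i\ge2$ are all true or all false; (5) the statements $p^{(k)}_j\rho p^{(l)}_i$ with $j-i\ge2$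 are all true or all false; (6) the statements $q\rho p^{(k)}_i$ ($2\le i\le5$) are all true or all false; (7) the statements $p^{(k)}_i\rho q$ ($2\le i\le 5$) are all true or all false. A unary FA-foundational partial order is one in which $\rho$ is a partial order on $Q$. Propagation yields $(\hat Q,\hat\rho)$ with $\hat Q=Q'\cup\{p^{(k)}_i:0\le k<n,\ i\in\mathbb{N}\}$ ($\mathbb{N}=\{1,2,\dots\}$, new elements for $i\ge6$) and: $\hat\rho=\rho$ on $Q'$; $p^{(k)}_i\hat\rho p^{(l)}_j$ iff [$j=i$ and $p^{(k)}_1\rho p^{(l)}_1$] or [$j=i+1$ and $p^{(k)}_1\rho p^{(l)}_2$] or [$j=i-1$ and $p^{(k)}_2\rho p^{(l)}_1$] or [$j\ge i+2$ and $p^{(k)}_1\rho p^{(l)}_3$] or [$j\le i-2$ and $p^{(k)}_3\rho p^{(l)}_1$]; for $q\in Q'$: $q\hat\rho p^{(k)}_1$ iff $q\rho p^{(k)}_1$, $q\hat\rho p^{(k)}_i$ ($i\ge2$) iff $q\rho p^{(k)}_2$, $p^{(k)}_1\hat\rho q$ iff $p^{(k)}_1\rho q$, $p^{(k)}_i\hat\rho q$ ($i\ge2$) iff $p^{(k)}_2\rho q$. *)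

From mathcomp Require Import all_boot.
Set Implicit Arguments. Unset Strict Implicit. Unset Printing Implicit Defensive.

Record dfa (Sigma : Type) := DFA {
  dstate : finType;
  dstart : dstate;
  dstep : dstate -> Sigma -> dstate;
  dfinal : pred dstate }.

Definition dfa_accept (Sigma : Type) (A : dfa Sigma) (w : seq Sigma) : bool :=
  @dfinal _ A (foldl (@dstep _ A) (@dstart _ A) w).

Definition regular (Sigma : Type) (L : seq Sigma -> Prop) : Prop :=
  exists A : dfa Sigma, forall w, L w <-> dfa_accept A w.

(* convolution of two words; None plays the role of the padding symbol $ *)
Definition conv (Sigma : Type) (u v : seq Sigma) : seq (option Sigma * option Sigma) :=
  mkseq (fun i => (nth None (map Some u) i, nth None (map Some v) i))
        (maxn (size u) (size v)).

Definition regular2 (Sigma : Type) (S : seq Sigma -> seq Sigma -> Prop) : Prop :=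
  regular (fun w => exists u v, S u v /\ w = conv u v).

Definition unary_FA_presentable (X : Type) (R : X -> X -> Prop) : Prop :=
  exists (L : seq unit -> Prop) (phi : {u | L u} -> X),
    regular L /\
    (forall x, exists u, phi u = x) /\
    regular2 (fun u v => exists (hu : L u) (hv : L v),
                 phi (exist _ u hu) = phi (exist _ v hv)) /\
    regular2 (fun u v => exists (hu : L u) (hv : L v),
                 R (phi (exist _ u hu)) (phi (exist _ v hv))).

Definition partial_order (X : Type) (R : X -> X -> Prop) : Prop :=
  (forall x, R x x) /\ (forall x y, R x y -> R y x -> x = y) /\
  (forall x y z, R x y -> R y z -> R x z).

(* ---------- Unary FA-foundational relations ----------
   Seeds P_k = {p k 0, ..., p k 4} (0-based: p k i is p^{(k)}_{i+1}). *)
Section Found.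
Variables (Q : finType) (rho : rel Q) (n : nat) (p : 'I_n -> 'I_5 -> Q).

Definition seeds_disjoint : Prop :=
  injective (fun ki : 'I_n * 'I_5 => p ki.1 ki.2).

Definition inQ' (q : Q) : bool := [forall k, forall i, p k i != q].

Definition FA_foundational : Prop :=
  seeds_disjoint /\
  forall k l : 'I_n,
   (forall i j : 'I_5, rho (p k i) (p l i) = rho (p k j) (p l j)) /\
   (forall i i' j j' : 'I_5, i' = i.+1 :> nat -> j' = j.+1 :> nat ->
                rho (p k i) (p l i') = rho (p k j) (p l j')) /\
   (forall i i' j j' : 'I_5, i' = i.+1 :> nat -> j' = j.+1 :> nat ->
                rho (p k i') (p l i) = rho (p k j') (p l j)) /\
   (forall i j i' j' : 'I_5, i + 2 <= j -> i' + 2 <= j' ->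
                rho (p k i) (p l j) = rho (p k i') (p l j')) /\
   (forall i j i' j' : 'I_5, i + 2 <= j -> i' + 2 <= j' ->
                rho (p k j) (p l i) = rho (p k j') (p l i')) /\
   (forall q, inQ' q -> forall i j : 'I_5, 0 < i -> 0 < j ->
                rho q (p k i) = rho q (p k j)) /\
   (forall q, inQ' q -> forall i j : 'I_5, 0 < i -> 0 < j ->
                rho (p k i) q = rho (p k j) q).

Definition seed_antichain (k : 'I_n) : Prop :=
  forall i j : 'I_5, i != j -> ~~ rho (p k i) (p k j).
Definition seed_ascending (k : 'I_n) : Prop :=
  forall i i' : 'I_5, i' = i.+1 :> nat -> rho (p k i) (p k i') && (p k i != p k i').
Definition seed_descending (k : 'I_n) : Prop :=
  forall i i' : 'I_5, i' = i.+1 :> nat -> rho (p k i') (p k i) && (p k i' != p k i).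

(* ---------- Propagation ----------
   Elements: inl q for q in Q', inr (k, m) for p^{(k)}_{m+1}, m : nat. *)
Definition hatQ : Type := ({q : Q | inQ' q} + ('I_n * nat))%type.

Definition s0 : 'I_5 := @Ordinal 5 0 isT.
Definition s1 : 'I_5 := @Ordinal 5 1 isT.
Definition s2 : 'I_5 := @Ordinal 5 2 isT.

Definition hat_rho (x y : hatQ) : bool :=
  match x, y with
  | inl q, inl q' => rho (val q) (val q')
  | inr (k, m), inr (l, m') =>
      [|| (m' == m) && rho (p k s0) (p l s0),
          (m' == m.+1) && rho (p k s0) (p l s1),
          (m'.+1 == m) && rho (p k s1) (p l s0),
          (m.+2 <= m') && rho (p k s0) (p l s2)
        | (m'.+2 <= m) && rho (p k s2) (p l s0)]
  | inl q, inr (k, m) =>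
      if m == 0 then rho (val q) (p k s0) else rho (val q) (p k s1)
  | inr (k, m), inl q =>
      if m == 0 then rho (p k s0) (val q) else rho (p k s1) (val q)
  end.
End Found.

(* In a unary presentation every regular relation on codes a^i is eventually
   periodic: an automaton reading conv(a^i, a^j) runs through the common prefix
   and then through a one-letter tail, and its run on a^t is periodic in t from
   #states on, with a period dividing #states!. Conversely, eventually periodic
   relations are recognised by counter automata.
   Given a presentation, keep the least code of each element. Representatives
   below a threshold B form Q'; beyond B they are periodic modulo a gap N (a
   common multiple of the periods exceeding all thresholds), and each residue
   class r yields a seed p^(r)_m = B + r + N m. By periodicity the order between
   seed elements depends only on whether their indices are equal, adjacent or
   farther apart, and the order between Q' and p^(r)_m does not depend on
   m >= 1: this is exactly propagation, and comparing p_1 with p_3 shows that a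
   seed is a chain or an antichain. Conversely, a propagated order is coded by
   listing Q' and then p^(k)_m at |Q'| + k + n m; its relations are eventually
   periodic with period n, hence regular. *)

From Stdlib Require Import Classical ClassicalEpsilon ProofIrrelevance.
From mathcomp Require Import all_boot zify.
Set Implicit Arguments. Unset Strict Implicit. Unset Printing Implicit Defensive.

(** * Unary words and their convolutions *)

Notation SS := (Some tt, Some tt).
Notation SN := (Some tt, None).
Notation NS := (None, Some tt).

Lemma unit_seqE (u : seq unit) : u = nseq (size u) tt.
Proof. by elim: u => [|[] u IH] //=; rewrite -IH. Qed.

Lemma nth_Some_nseq i t :
  nth None (map Some (nseq i tt)) t = if t < i then Some tt else None.
Proof.
case: ltnP => h; first by rewrite (nth_map tt) ?size_nseq // nth_nseq h.
by rewrite nth_default // size_map size_nseq.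
Qed.

Lemma conv_nseq i j : conv (nseq i tt) (nseq j tt) =
  nseq (minn i j) SS ++ nseq (i - j) SN ++ nseq (j - i) NS.
Proof.
apply: (@eq_from_nth _ (None, None)); first by rewrite size_mkseq !size_cat !size_nseq; lia.
rewrite size_mkseq !size_nseq => t ht.
rewrite nth_mkseq ?size_nseq // !nth_Some_nseq !nth_cat !size_nseq !nth_nseq.
by repeat case: ifP; move=> *; first [done | exfalso; lia].
Qed.

Lemma conv_nseq_inj i j i' j' :
  conv (nseq i tt) (nseq j tt) = conv (nseq i' tt) (nseq j' tt) -> i = i' /\ j = j'.
Proof.
have count1 a b : count (fun z : option unit * option unit => z.1 != None)
    (conv (nseq a tt) (nseq b tt)) = a.
  by rewrite conv_nseq !count_cat !count_nseq /=; lia.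
have count2 a b : count (fun z : option unit * option unit => z.2 != None)
    (conv (nseq a tt) (nseq b tt)) = b.
  by rewrite conv_nseq !count_cat !count_nseq /=; lia.
by move=> E; split; [rewrite -(count1 i j) E count1 | rewrite -(count2 i j) E count2].
Qed.

Lemma nseqSr (T : Type) n (x : T) : nseq n.+1 x = rcons (nseq n x) x.
Proof. by rewrite -cats1 -(nseqD n 1) addn1. Qed.

Lemma conv_rcons_SS i :
  rcons (conv (nseq i tt) (nseq i tt)) SS = conv (nseq i.+1 tt) (nseq i.+1 tt).
Proof. by rewrite !conv_nseq !minnn !subnn !cats0 -nseqSr. Qed.

Lemma conv_rcons_SN i j : j <= i ->
  rcons (conv (nseq i tt) (nseq j tt)) SN = conv (nseq i.+1 tt) (nseq j tt).
Proof.
move=> le_ji; rewrite !conv_nseq.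
rewrite (minn_idPr le_ji) (minn_idPr (leqW le_ji)) subSn // !(eqP le_ji) (eqP (leqW le_ji)).
by rewrite !cats0 rcons_cat -nseqSr.
Qed.

Lemma conv_rcons_NS i j : i <= j ->
  rcons (conv (nseq i tt) (nseq j tt)) NS = conv (nseq i tt) (nseq j.+1 tt).
Proof.
move=> le_ij; rewrite !conv_nseq.
rewrite (minn_idPl le_ij) (minn_idPl (leqW le_ij)) subSn // (eqP le_ij) (eqP (leqW le_ij)).
by rewrite !rcons_cat -nseqSr.
Qed.

(** * Eventually periodic predicates and relations on [nat] *)

Definition eperiodic (P : nat -> bool) T N := forall i, T <= i -> P (i + N) = P i.

(* The shape of periodicity of a relation read by an automaton on [conv a^i a^j]:
   the common prefix is periodic, and so is the tail of the longer word once it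
   is at least [T] letters long. *)
Record eperiodic2 (S : nat -> nat -> bool) T N : Prop := EPeriodic2 {
  eperiodic2_diag : forall i j, T <= i -> T <= j -> S (i + N) (j + N) = S i j;
  eperiodic2_right : forall i j, i + T <= j -> S i (j + N) = S i j;
  eperiodic2_left : forall i j, j + T <= i -> S (i + N) j = S i j }.

Section EventuallyPeriodic.
Variables (T N : nat).

Lemma eperiodicMn P q : eperiodic P T N -> eperiodic P T (N * q).
Proof.
move=> perP; elim: q => [|q IHq] i le_Ti; first by rewrite muln0 addn0.
by rewrite mulnS (addnC N) addnA perP ?IHq //; lia.
Qed.

Lemma eperiodic_shift P q i : eperiodic P T N -> T <= i -> P (i + N * q) = P i.
Proof. by move=> perP; apply: eperiodicMn. Qed.

Lemma eperiodic_leq P T' : eperiodic P T N -> T <= T' -> eperiodic P T' N.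
Proof. by move=> perP le_TT' i le_T'i; apply: perP; lia. Qed.

Lemma eperiodic2Mn S q : eperiodic2 S T N -> eperiodic2 S T (N * q).
Proof.
case=> Pd Pr Pl; elim: q => [|q [Qd Qr Ql]]; first by split=> *; rewrite muln0 !addn0.
have E a : a + N * q.+1 = (a + N * q) + N by rewrite mulnS; lia.
by split=> i j *; rewrite ?E; [rewrite Pd ?Qd | rewrite Pr ?Qr | rewrite Pl ?Ql]; lia.
Qed.

Lemma eperiodic2_leq S T' : eperiodic2 S T N -> T <= T' -> eperiodic2 S T' N.
Proof. by case=> Pd Pr Pl le_TT'; split=> *; [apply: Pd | apply: Pr | apply: Pl]; lia. Qed.

Section Shifts.
Variable S : nat -> nat -> bool.
Hypothesis perS : eperiodic2 S T N.

Lemma eperiodic2_diag_shift i j q :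
  T <= i -> T <= j -> S (i + N * q) (j + N * q) = S i j.
Proof. by apply: eperiodic2_diag; apply: eperiodic2Mn. Qed.

Lemma eperiodic2_right_shift i j q : i + T <= j -> S i (j + N * q) = S i j.
Proof. by apply: eperiodic2_right; apply: eperiodic2Mn. Qed.

Lemma eperiodic2_left_shift i j q : j + T <= i -> S (i + N * q) j = S i j.
Proof. by apply: eperiodic2_left; apply: eperiodic2Mn. Qed.
End Shifts.
End EventuallyPeriodic.

(** * Unary automata are eventually periodic *)

Lemma foldl_nseq (A B : Type) (f : A -> B -> A) s n x :
  foldl f s (nseq n x) = iter n (f^~ x) s.
Proof. by elim: n s => [|n IH] s //=; rewrite IH -iterSr. Qed.

(* Among the first [#|S|+1] iterates two coincide, and their distance divides [#|S|`!]. *)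
Lemma iter_fact_period (S : finType) (f : S -> S) x t :
  #|S| <= t -> iter (t + #|S|`!) f x = iter t f x.
Proof.
move=> le_St.
have [a [b [lt_ab [le_bS Eab]]]] :
    exists a b, a < b /\ b <= #|S| /\ iter a f x = iter b f x.
  apply: NNPP => noRep.
  have inj : injective (fun k : 'I_#|S|.+1 => iter k f x).
    move=> k1 k2 /= E12; apply/val_inj.
    by case: (ltngtP k1 k2) => // [lt12|lt21]; case: noRep;
      [exists k1, k2 | exists k2, k1]; (split=> //; split=> //; rewrite -ltnS; apply: ltn_ord).
  by have := leq_card _ inj; rewrite card_ord ltnn.
have periodic s : a <= s -> iter (s + (b - a)) f x = iter s f x.
  move=> le_as; have -> : s + (b - a) = (s - a) + b by lia.
  by rewrite iterD -Eab -iterD; congr iter; lia.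
have /dvdnP [q ->] : (b - a) %| #|S|`! by apply: dvdn_fact; lia.
elim: q => [|q IHq]; first by rewrite addn0.
by rewrite mulSn (addnC (b - a)) addnA periodic ?IHq //; lia.
Qed.

Definition accept2 (A : dfa (option unit * option unit)) i j :=
  dfa_accept A (conv (nseq i tt) (nseq j tt)).

Lemma accept2E A i j : accept2 A i j =
  dfinal (iter (j - i) (fun y => dstep y NS) (iter (i - j) (fun y => dstep y SN)
     (iter (minn i j) (fun y => dstep y SS) (dstart A)))).
Proof. by rewrite /accept2 /dfa_accept conv_nseq !foldl_cat !foldl_nseq. Qed.

Lemma eperiodic2_accept2 A : eperiodic2 (accept2 A) #|dstate A| #|dstate A|`!.
Proof.
set F := #|dstate A|`!.
split=> i j *; rewrite !accept2E.
- have -> : minn (i + F) (j + F) = minn i j + F by lia.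
  have -> : i + F - (j + F) = i - j by lia.
  have -> : j + F - (i + F) = j - i by lia.
  by rewrite iter_fact_period //; lia.
- have -> : minn i (j + F) = minn i j by lia.
  have -> : i - (j + F) = i - j by lia.
  have -> : j + F - i = (j - i) + F by lia.
  by rewrite iter_fact_period //; lia.
- have -> : minn (i + F) j = minn i j by lia.
  have -> : j - (i + F) = j - i by lia.
  have -> : i + F - j = (i - j) + F by lia.
  by rewrite iter_fact_period //; lia.
Qed.

Lemma eperiodic_accept (A : dfa unit) :
  eperiodic (fun i => dfa_accept A (nseq i tt)) #|dstate A| #|dstate A|`!.
Proof. by move=> i le_Ai; rewrite /dfa_accept !foldl_nseq iter_fact_period. Qed.

Lemma regular2_accept2 (Rel : seq unit -> seq unit -> Prop) : regular2 Rel ->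
  exists A, forall i j, Rel (nseq i tt) (nseq j tt) <-> accept2 A i j.
Proof.
move=> [A accA]; exists A => i j; rewrite /accept2 -accA; split.
  by exists (nseq i tt), (nseq j tt).
move=> [u [v [Ruv E]]]; rewrite (unit_seqE u) (unit_seqE v) in Ruv E.
by have [-> ->] := conv_nseq_inj E.
Qed.

(** * Eventually periodic relations are regular *)

Section CounterAutomata.
Variables (T N : nat).
Hypothesis N_gt0 : 0 < N.

Definition reduce t := if t < T then t else T + (t - T) %% N.

Lemma reduce_small t : t < T -> reduce t = t.
Proof. by rewrite /reduce => ->. Qed.

Lemma reduce_large t : T <= t -> T <= reduce t /\ t = reduce t + N * ((t - T) %/ N).
Proof.
move=> le_Tt; rewrite /reduce ltnNge le_Tt /=; split; first exact: leq_addr.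
by have := divn_eq (t - T) N; lia.
Qed.

Lemma reduce0 : reduce 0 = 0.
Proof. by rewrite /reduce; case: ltnP => // le_T0; rewrite sub0n mod0n; lia. Qed.

Lemma reduceS t : reduce t.+1 = if (reduce t).+1 < T + N then (reduce t).+1 else T.
Proof.
rewrite /reduce; case: (ltnP t.+1 T) => lt1; first by rewrite ifT ?ifT //; lia.
case: (ltnP t T) => lt0.
  have -> : t.+1 - T = 0 by lia.
  by rewrite mod0n ifT; lia.
have -> : t.+1 - T = (t - T).+1 by lia.
have Et := divn_eq (t - T) N; have lt_rN := ltn_pmod (t - T) N_gt0.
set q := (t - T) %/ N in Et *; set r := (t - T) %% N in Et lt_rN *.
have -> : (t - T).+1 = q * N + r.+1 by lia.
rewrite modnMDl; case: (ltnP r.+1 N) => lt_r1N; first by rewrite modn_small // ifT //; lia.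
have -> : r.+1 = N by lia.
by rewrite modnn ifF //; lia.
Qed.

Lemma eperiodic_reduce P t : eperiodic P T N -> P (reduce t) = P t.
Proof.
move=> perP; case: (ltnP t T) => [lt_tT|le_Tt]; first by rewrite reduce_small.
by have [le_T Et] := reduce_large le_Tt; rewrite {2}Et (eperiodic_shift _ perP le_T).
Qed.

Section Relation.
Variable S : nat -> nat -> bool.
Hypothesis perS : eperiodic2 S T N.

Lemma eperiodic2_reduce_le i j : i <= j -> S (reduce i) (reduce i + reduce (j - i)) = S i j.
Proof.
move=> le_ij.
have -> : S i j = S (reduce i) (reduce i + (j - i)).
  case: (ltnP i T) => [lt_iT|le_Ti]; first by rewrite reduce_small //; congr S; lia.
  have [le_T Ei] := reduce_large le_Ti.
  rewrite -(eperiodic2_diag_shift perS ((i - T) %/ N) le_T); last by lia.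
  by congr S; lia.
case: (ltnP (j - i) T) => [lt_dT|le_Td]; first by rewrite (reduce_small lt_dT).
have [le_T Ed] := reduce_large le_Td.
by rewrite {2}Ed addnA (eperiodic2_right_shift perS) //; lia.
Qed.

Lemma eperiodic2_reduce_ge i j : j <= i -> S (reduce (i - j) + reduce j) (reduce j) = S i j.
Proof.
move=> le_ji.
have -> : S i j = S ((i - j) + reduce j) (reduce j).
  case: (ltnP j T) => [lt_jT|le_Tj]; first by rewrite reduce_small //; congr S; lia.
  have [le_T Ej] := reduce_large le_Tj.
  rewrite -(eperiodic2_diag_shift perS ((j - T) %/ N) _ le_T); last by lia.
  by congr S; lia.
case: (ltnP (i - j) T) => [lt_dT|le_Td]; first by rewrite (reduce_small lt_dT).
have [le_T Ed] := reduce_large le_Td.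
rewrite {2}Ed -addnA (addnC (N * _)) addnA (eperiodic2_left_shift perS) //; lia.
Qed.
End Relation.

Definition counter := 'I_(T + N).+1.
Definition tick (x : counter) : counter := inord (if x.+1 < T + N then x.+1 else T).

Lemma iter_tick t : iter t tick ord0 = reduce t :> nat.
Proof.
elim: t => [|t IHt]; first by rewrite reduce0.
rewrite iterS /tick inordK IHt ?reduceS //.
by case: (ltnP (reduce t).+1 (T + N)); lia.
Qed.

Lemma regular_eperiodic (L : seq unit -> Prop) (P : nat -> bool) :
  eperiodic P T N -> (forall i, L (nseq i tt) <-> P i) -> regular L.
Proof.
move=> perP LP; exists (@DFA _ counter ord0 (fun x _ => tick x) (fun x : counter => P x)) => w.
by rewrite /dfa_accept /= (unit_seqE w) LP foldl_nseq iter_tick eperiodic_reduce.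
Qed.

(* A two-tape counter automaton: it counts the common prefix of [conv a^i a^j]
   in [x] and the tail in [y], both up to [reduce]; the phase records whether
   it is still on the common prefix ([None]) or on a tail of the left ([Some
   true]) or right ([Some false]) word. *)
Definition cstate := option (option bool * counter * counter).
Definition cstart : cstate := Some (None, ord0, ord0).

Definition cstep (s : cstate) (z : option unit * option unit) : cstate :=
  match s, z with
  | Some (None, x, y), (Some _, Some _) => Some (None, tick x, y)
  | Some (ph, x, y), (Some _, None) =>
      if ph != Some false then Some (Some true, x, tick y) else None
  | Some (ph, x, y), (None, Some _) =>
      if ph != Some true then Some (Some false, x, tick y) else None
  | _, _ => None
  end.

Lemma iter_cstep_SS k x y :
  iter k (cstep^~ SS) (Some (None, x, y)) = Some (None, iter k tick x, y).
Proof. by elim: k => //= k ->. Qed.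

Lemma iter_cstep_SN k ph x y : ph != Some false ->
  iter k.+1 (cstep^~ SN) (Some (ph, x, y)) = Some (Some true, x, iter k.+1 tick y).
Proof.
move=> ph_ok; elim: k => [|k IHk]; last by rewrite iterS IHk.
by case: ph ph_ok => [[]|].
Qed.

Lemma iter_cstep_NS k ph x y : ph != Some true ->
  iter k.+1 (cstep^~ NS) (Some (ph, x, y)) = Some (Some false, x, iter k.+1 tick y).
Proof.
move=> ph_ok; elim: k => [|k IHk]; last by rewrite iterS IHk.
by case: ph ph_ok => [[]|].
Qed.

Lemma cstep_conv i j : foldl cstep cstart (conv (nseq i tt) (nseq j tt)) =
  Some (if i == j then None else Some (j < i),
        iter (minn i j) tick ord0, iter ((i - j) + (j - i)) tick ord0).
Proof.
rewrite conv_nseq !foldl_cat !foldl_nseq iter_cstep_SS.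
case: (ltngtP i j) => [lt_ij|lt_ji|<-]; last by rewrite subnn.
- have -> : i - j = 0 by lia.
  have -> : j - i = (j - i).-1.+1 by lia.
  by rewrite iter_cstep_NS.
- have -> : j - i = 0 by lia.
  have -> : i - j = (i - j).-1.+1 by lia.
  by rewrite iter_cstep_SN //= addn0.
Qed.

Lemma cstep_conv_inv w s :
  foldl cstep cstart w = Some s -> exists i j, w = conv (nseq i tt) (nseq j tt).
Proof.
elim/last_ind: w s => [|w z IHw] s; first by exists 0, 0; rewrite conv_nseq.
rewrite foldl_rcons; case Ew: (foldl cstep cstart w) => [s'|] //.
have [i [j Eij]] := IHw _ Ew; move: Ew; rewrite Eij cstep_conv => -[<-].
case: z => [[[]|] [[]|]] //=; case: (i =P j) => [<-|ne_ij] //=.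
- by move=> _; exists i.+1, i.+1; rewrite conv_rcons_SS.
- by move=> _; exists i.+1, i; rewrite conv_rcons_SN.
- by case: ltnP => // lt_ji _; exists i.+1, j; rewrite conv_rcons_SN // ltnW.
- by move=> _; exists i, i.+1; rewrite conv_rcons_NS.
- by case: ltnP => // le_ij _; exists i, j.+1; rewrite conv_rcons_NS.
Qed.

Section Regular2.
Variable S : nat -> nat -> bool.
Hypothesis perS : eperiodic2 S T N.

Definition cfinal (s : cstate) : bool :=
  match s with
  | Some (None, x, _) => S x x
  | Some (Some true, x, y) => S (y + x) x
  | Some (Some false, x, y) => S x (x + y)
  | None => false
  end.

Lemma cfinal_conv i j : cfinal (foldl cstep cstart (conv (nseq i tt) (nseq j tt))) = S i j.
Proof.
rewrite cstep_conv /= !iter_tick.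
case: (ltngtP i j) => [lt_ij|lt_ji|<-] /=.
- have -> : i - j + (j - i) = j - i by lia.
  by rewrite eperiodic2_reduce_le // ltnW.
- have -> : i - j + (j - i) = i - j by lia.
  by rewrite eperiodic2_reduce_ge // ltnW.
- by rewrite -(eperiodic2_reduce_le perS (leqnn i)) subnn reduce0 addn0.
Qed.

Lemma regular2_eperiodic2 (Rel : seq unit -> seq unit -> Prop) :
  (forall i j, Rel (nseq i tt) (nseq j tt) <-> S i j) -> regular2 Rel.
Proof.
move=> RelS; exists (@DFA _ cstate cstart cstep cfinal) => w; rewrite /dfa_accept /=.
split=> [[u [v [Ruv ->]]]|].
  by rewrite (unit_seqE u) (unit_seqE v) cfinal_conv -RelS -!unit_seqE.
case Ew: (foldl cstep cstart w) => [s|] // fin_s.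
have [i [j Eij]] := cstep_conv_inv Ew.
by exists (nseq i tt), (nseq j tt); split=> //; apply/RelS; rewrite -cfinal_conv -Eij Ew.
Qed.
End Regular2.
End CounterAutomata.

(** * The propagated relation *)

Definition oget (A : Type) (o : option A) : isSome o -> A :=
  if o is Some a return isSome o -> A then fun=> a
  else fun none => False_rect A (Bool.diff_false_true none).

Lemma ogetE (A : Type) (o : option A) (h : isSome o) a : o = Some a -> oget h = a.
Proof. by move=> Eo; move: h; rewrite Eo. Qed.

Section Propagation.
Variables (Q : finType) (rho : rel Q) (n : nat) (p : 'I_n -> 'I_5 -> Q).
Local Notation hatR := (@hat_rho Q rho n p).

Ltac seed_distance := move=> ? /=; do ![case: eqP => /= ?]; do ![case: leqP => /= ?];
  rewrite ?orbF //; lia.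

Lemma hat_rho_eq k l m m' : m' = m ->
  hatR (inr (k, m)) (inr (l, m')) = rho (p k s0) (p l s0).
Proof. by seed_distance. Qed.

Lemma hat_rho_succ k l m m' : m' = m.+1 ->
  hatR (inr (k, m)) (inr (l, m')) = rho (p k s0) (p l s1).
Proof. by seed_distance. Qed.

Lemma hat_rho_pred k l m m' : m'.+1 = m ->
  hatR (inr (k, m)) (inr (l, m')) = rho (p k s1) (p l s0).
Proof. by seed_distance. Qed.

Lemma hat_rho_above k l m m' : m.+2 <= m' ->
  hatR (inr (k, m)) (inr (l, m')) = rho (p k s0) (p l s2).
Proof. by seed_distance. Qed.

Lemma hat_rho_below k l m m' : m'.+2 <= m ->
  hatR (inr (k, m)) (inr (l, m')) = rho (p k s2) (p l s0).
Proof. by seed_distance. Qed.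

Lemma hat_rho_shift k l m m' :
  hatR (inr (k, m.+1)) (inr (l, m'.+1)) = hatR (inr (k, m)) (inr (l, m')).
Proof. by rewrite /= !eqSS !ltnS. Qed.

(* [hatQ p] is coded in [nat] by listing [Q'] first and then [p k m] at
   [#|Q'| + k + n * m], so that shifting a seed index is adding [n]. *)
Local Notation Q' := {q : Q | inQ' p q}.
Local Notation nQ' := #|{: Q'}|.

Definition hat_encode (a : hatQ p) : nat :=
  match a with inl q => enum_rank q | inr (k, m) => nQ' + k + n * m end.

Definition hat_decode (i : nat) : option (hatQ p) :=
  match insub i : option 'I_nQ' with
  | Some o => Some (inl (enum_val o))
  | None => omap (fun k => inr (k, (i - nQ') %/ n)) (insub ((i - nQ') %% n) : option 'I_n)
  end.

Lemma hat_encodeK : pcancel hat_encode hat_decode.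
Proof.
case=> [q|[k m]] /=; first by rewrite /hat_decode (valK (enum_rank q : 'I_nQ')) enum_rankK.
rewrite /hat_decode insubF; last by apply/negbTE; rewrite -leqNgt; lia.
have -> : nQ' + k + n * m - nQ' = m * n + k by lia.
have n_gt0 : 0 < n by case: n k {m} => [[]|].
by rewrite modnMDl modn_small // (valK k) divnMDl // divn_small // addn0.
Qed.

Lemma hat_decodeK i a : hat_decode i = Some a -> hat_encode a = i.
Proof.
rewrite /hat_decode; case: insubP => [o _ vo [<-]|]; first by rewrite /= enum_valK.
rewrite -leqNgt => le_i; case: insubP => [k _ vk [<-]|] //=.
by rewrite -[nat_of_ord k]/(val k) vk; have := divn_eq (i - nQ') n; lia.
Qed.

Lemma hat_encode_seed_shift k m : hat_encode (inr (k, m)) + n = hat_encode (inr (k, m.+1)).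
Proof. by rewrite /= mulnS; lia. Qed.

Lemma hat_decode_Q' i : nQ' <= i -> (exists a, hat_decode i = Some (inl a)) -> False.
Proof. by move=> le_i [q /hat_decodeK Ei]; move: le_i; rewrite -Ei leqNgt ltn_ord. Qed.

Lemma hat_decode_high i : nQ' <= i ->
  (n = 0 /\ hat_decode i = None) \/ exists k m, hat_encode (inr (k, m)) = i.
Proof.
move=> le_i; case Ei: (hat_decode i) => [[q|[k m]]|].
- by case: (hat_decode_Q' le_i); exists q.
- by right; exists k, m; apply: hat_decodeK.
case: (posnP n) => [n0|n_gt0]; [by left | right].
exists (Ordinal (ltn_pmod (i - nQ') n_gt0)), ((i - nQ') %/ n) => /=.
by have := divn_eq (i - nQ') n; lia.
Qed.

Definition hat_code_dom i := isSome (hat_decode i).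

Definition hat_code_rel i j :=
  if (hat_decode i, hat_decode j) is (Some a, Some b) then hatR a b else false.

Definition hat_period := maxn n 1.
(* The [.+1] makes [i + hat_threshold <= j] force [i != j] even when [Q'] and the
   seeds are empty. *)
Definition hat_threshold := (nQ' + 2 * n).+1.

Lemma hat_period_gt0 : 0 < hat_period.
Proof. exact: leq_maxr. Qed.

Lemma hat_decode_seed_period k m :
  hat_decode (hat_encode (inr (k, m)) + hat_period) = Some (inr (k, m.+1)).
Proof.
rewrite /hat_period (maxn_idPl (_ : 0 < n)) ?hat_encode_seed_shift ?hat_encodeK //.
by case: (n) k => [[]|].
Qed.

Lemma hat_decode_high_period i : nQ' <= i ->
  (hat_decode i = None /\ hat_decode (i + hat_period) = None) \/
  exists k m, hat_encode (inr (k, m)) = i.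
Proof.
move=> le_i; case: (hat_decode_high le_i) => [[n0 Ei]|]; [left | by right].
split=> //; case: (hat_decode_high (leq_trans le_i (leq_addr hat_period i))) => [[] //|[k _]].
by have := ltn_ord k; lia.
Qed.

Lemma hat_rho_Q'_seed q l m : 0 < m -> hatR (inl q) (inr (l, m)) = rho (val q) (p l s1).
Proof. by case: m. Qed.

Lemma hat_rho_seed_Q' q k m : 0 < m -> hatR (inr (k, m)) (inl q) = rho (p k s1) (val q).
Proof. by case: m. Qed.

Lemma hat_encode_seed_ge l m d : nQ' + d * n <= hat_encode (inr (l, m)) -> d <= m.
Proof. by have := ltn_ord l; rewrite /=; nia. Qed.

Lemma hat_encode_seed_leq k l m m' d :
  hat_encode (inr (k, m)) + d * n <= hat_encode (inr (l, m')) -> m + d <= m'.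
Proof. by have := ltn_ord k; have := ltn_ord l; rewrite /=; nia. Qed.

Lemma eperiodic2_hat_code_rel : eperiodic2 hat_code_rel hat_threshold hat_period.
Proof.
rewrite /hat_threshold /hat_code_rel; split=> i j.
- move=> le_i le_j; have [le_Qi le_Qj] : nQ' <= i /\ nQ' <= j by lia.
  case: (hat_decode_high_period le_Qi) => [[-> ->] //|[k [m <-]]].
  case: (hat_decode_high_period le_Qj) => [[-> ->]|[l [m' <-]]].
    by case: hat_decode; case: hat_decode.
  by rewrite !hat_decode_seed_period !hat_encodeK hat_rho_shift.
- move=> le_ij; have le_Qj : nQ' <= j by lia.
  case: (hat_decode_high_period le_Qj) => [[-> ->]|[l [m' Ej]]]; first by case: hat_decode.
  rewrite -Ej hat_decode_seed_period hat_encodeK.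
  case Ei: (hat_decode i) => [[q|[k m]]|] //.
    have lt_m' : 1 < m' by apply: (@hat_encode_seed_ge l); lia.
    by rewrite !hat_rho_Q'_seed //; lia.
  have le_mm' : m + 2 <= m'.
    by apply: (@hat_encode_seed_leq k l); rewrite (hat_decodeK Ei); lia.
  by rewrite !hat_rho_above //; lia.
- move=> le_ji; have le_Qi : nQ' <= i by lia.
  case: (hat_decode_high_period le_Qi) => [[-> ->] //|[k [m Ei]]].
  rewrite -Ei hat_decode_seed_period hat_encodeK.
  case Ej: (hat_decode j) => [[q|[l m']]|] //.
    have lt_m : 1 < m by apply: (@hat_encode_seed_ge k); lia.
    by rewrite !hat_rho_seed_Q' //; lia.
  have le_m'm : m' + 2 <= m.
    by apply: (@hat_encode_seed_leq l k); rewrite (hat_decodeK Ej); lia.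
  by rewrite !hat_rho_below //; lia.
Qed.

Lemma eperiodic_hat_code_dom : eperiodic hat_code_dom hat_threshold hat_period.
Proof.
move=> i; rewrite /hat_threshold /hat_code_dom => le_i; have le_Qi : nQ' <= i by lia.
case: (hat_decode_high_period le_Qi) => [[-> ->] //|[k [m <-]]].
by rewrite hat_decode_seed_period hat_encodeK.
Qed.

Lemma eperiodic2_hat_code_eq :
  eperiodic2 (fun i j => (i == j) && hat_code_dom i) hat_threshold hat_period.
Proof.
have := hat_period_gt0; rewrite /hat_threshold; split=> i j *.
- by rewrite eqn_add2r eperiodic_hat_code_dom.
- by have [-> ->] : (i == j + hat_period) = false /\ (i == j) = false by split; apply/eqP; lia.
- by have [-> ->] : (i + hat_period == j) = false /\ (i == j) = false by split; apply/eqP; lia.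
Qed.

Lemma unary_FA_presentable_propagation (X : Type) (R : X -> X -> Prop) (f : X -> hatQ p) :
  bijective f -> (forall x y, R x y <-> hatR (f x) (f y)) -> unary_FA_presentable R.
Proof.
case=> g fK gK Rf.
pose L (u : seq unit) : Prop := hat_code_dom (size u).
pose phi (u : {u | L u}) : X := g (oget (valP u)).
have phiE u (Lu : L u) a : hat_decode (size u) = Some a -> phi (exist _ u Lu) = g a.
  by move=> Eu; rewrite /phi /=; congr g; apply: ogetE.
have Lnseq i a : hat_decode i = Some a -> L (nseq i tt).
  by move=> Ei; rewrite /L size_nseq /hat_code_dom Ei.
have phi_nseq i (Li : L (nseq i tt)) :
    exists2 a, hat_decode i = Some a & phi (exist _ _ Li) = g a.
  have : hat_code_dom (size (nseq i tt)) := Li.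
  rewrite /hat_code_dom size_nseq; case Ei: (hat_decode i) => [a|] // _.
  by exists a => //; apply: phiE; rewrite size_nseq.
exists L, phi; split; [|split; [|split]].
- by apply: (regular_eperiodic hat_period_gt0 eperiodic_hat_code_dom) => i; rewrite /L size_nseq.
- move=> x; exists (exist _ _ (Lnseq _ _ (hat_encodeK (f x)))).
  by rewrite (phiE _ _ (f x)) ?size_nseq ?hat_encodeK.
- apply: (regular2_eperiodic2 hat_period_gt0 eperiodic2_hat_code_eq) => i j; split.
    move=> [Li [Lj]]; have [a Ei ->] := phi_nseq i Li; have [b Ej ->] := phi_nseq j Lj.
    move/(can_inj gK) => eab; subst b.
    by rewrite -(hat_decodeK Ei) -(hat_decodeK Ej) eqxx /hat_code_dom hat_encodeK.
  case/andP => /eqP <-; rewrite /hat_code_dom; case Ei: (hat_decode i) => [a|] // _.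
  by exists (Lnseq _ _ Ei), (Lnseq _ _ Ei).
- apply: (regular2_eperiodic2 hat_period_gt0 eperiodic2_hat_code_rel) => i j; split.
    move=> [Li [Lj]]; have [a Ei ->] := phi_nseq i Li; have [b Ej ->] := phi_nseq j Lj.
    by rewrite Rf !gK /hat_code_rel Ei Ej.
  rewrite /hat_code_rel; case Ei: (hat_decode i) => [a|] //; case Ej: (hat_decode j) => [b|] // ab.
  exists (Lnseq _ _ Ei), (Lnseq _ _ Ej).
  by rewrite (phiE _ _ a) ?(phiE _ _ b) ?size_nseq // Rf !gK.
Qed.
End Propagation.

(** * From a unary presentation to a propagated foundational order *)

Section Presentation.
Variables (X : Type) (R : X -> X -> Prop).
Hypothesis R_po : partial_order R.
Variables (L : seq unit -> Prop) (phi : {u | L u} -> X).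
Hypothesis phi_surj : forall x, exists u, phi u = x.
Variables (AL : dfa unit) (AE AR : dfa (option unit * option unit)).
Hypothesis AL_L : forall i, L (nseq i tt) <-> dfa_accept AL (nseq i tt).
Hypothesis AE_eq : forall i j, (exists Li Lj, phi (exist _ (nseq i tt) Li) =
  phi (exist _ (nseq j tt) Lj)) <-> accept2 AE i j.
Hypothesis AR_R : forall i j, (exists Li Lj, R (phi (exist _ (nseq i tt) Li))
  (phi (exist _ (nseq j tt) Lj))) <-> accept2 AR i j.

Definition code_dom i := dfa_accept AL (nseq i tt).
Definition code_eq := accept2 AE.
Definition code_rel := accept2 AR.

Definition cperiod := #|dstate AL|`! * #|dstate AE|`! * #|dstate AR|`!.
Definition cthreshold := #|dstate AL| + #|dstate AE| + #|dstate AR|.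

Lemma cperiod_gt0 : 0 < cperiod.
Proof. by rewrite !muln_gt0 !fact_gt0. Qed.

Lemma eperiodic_code_dom : eperiodic code_dom cthreshold cperiod.
Proof.
apply: (@eperiodic_leq #|dstate AL|); last by rewrite /cthreshold; lia.
rewrite /cperiod -mulnA; apply: eperiodicMn; exact: eperiodic_accept.
Qed.

Lemma eperiodic2_code_eq : eperiodic2 code_eq cthreshold cperiod.
Proof.
apply: (@eperiodic2_leq #|dstate AE|); last by rewrite /cthreshold; lia.
rewrite /cperiod mulnAC mulnC; apply: eperiodic2Mn; exact: eperiodic2_accept2.
Qed.

Lemma eperiodic2_code_rel : eperiodic2 code_rel cthreshold cperiod.
Proof.
apply: (@eperiodic2_leq #|dstate AR|); last by rewrite /cthreshold; lia.
rewrite /cperiod mulnC; apply: eperiodic2Mn; exact: eperiodic2_accept2.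
Qed.

Definition code_val i (h : code_dom i) : X := phi (exist _ (nseq i tt) (proj2 (AL_L i) h)).

Lemma phi_code_val i (Li : L (nseq i tt)) (h : code_dom i) :
  phi (exist _ (nseq i tt) Li) = code_val h.
Proof. by rewrite /code_val; congr phi; congr exist; apply: proof_irrelevance. Qed.

Lemma code_val_eq i j (hi : code_dom i) (hj : code_dom j) : i = j -> code_val hi = code_val hj.
Proof. by move=> eij; subst j; congr code_val; apply: proof_irrelevance. Qed.

Lemma code_eq_dom i j : code_eq i j -> code_dom i /\ code_dom j.
Proof. by move/AE_eq => [Li [Lj _]]; split; apply/AL_L. Qed.

Lemma code_eqP i j (hi : code_dom i) (hj : code_dom j) :
  code_eq i j <-> code_val hi = code_val hj.
Proof.
rewrite /code_eq -AE_eq; split=> [[Li [Lj]]|E]; first by rewrite !phi_code_val.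
by exists (proj2 (AL_L i) hi), (proj2 (AL_L j) hj).
Qed.

Lemma code_relP i j (hi : code_dom i) (hj : code_dom j) :
  code_rel i j <-> R (code_val hi) (code_val hj).
Proof.
rewrite /code_rel -AR_R; split=> [[Li [Lj]]|E]; first by rewrite !phi_code_val.
by exists (proj2 (AL_L i) hi), (proj2 (AL_L j) hj).
Qed.

Lemma code_eq_refl i : code_dom i -> code_eq i i.
Proof. by move=> hi; apply/(code_eqP hi hi). Qed.

Lemma code_eq_sym i j : code_eq i j -> code_eq j i.
Proof.
move=> eij; have [hi hj] := code_eq_dom eij.
by move/(code_eqP hi hj): eij => eij; apply/(code_eqP hj hi).
Qed.

Lemma code_eq_trans i j k : code_eq i j -> code_eq j k -> code_eq i k.
Proof.
move=> eij ejk; have [hi hj] := code_eq_dom eij; have [_ hk] := code_eq_dom ejk.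
move/(code_eqP hi hj): eij; move/(code_eqP hj hk): ejk => ejk eij.
by apply/(code_eqP hi hk); rewrite eij.
Qed.

Definition is_rep i := code_dom i && all (fun j => ~~ (code_dom j && code_eq j i)) (iota 0 i).

Lemma is_repP i :
  reflect (code_dom i /\ forall j, j < i -> ~~ (code_dom j && code_eq j i)) (is_rep i).
Proof.
apply: (iffP andP) => [[hi /allP least]|[hi least]]; split=> //.
  by move=> j lt_ji; apply: least; rewrite mem_iota.
by apply/allP => j; rewrite mem_iota => /andP [_ lt_ji]; apply: least.
Qed.

Lemma is_rep_dom i : is_rep i -> code_dom i.
Proof. by case/andP. Qed.

Lemma is_rep_inj i j : is_rep i -> is_rep j -> code_eq i j -> i = j.
Proof.
move=> /is_repP [hi least_i] /is_repP [hj least_j] eij.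
case: (ltngtP i j) => // [lt_ij|lt_ji].
  by move: (least_j _ lt_ij); rewrite hi eij.
by move: (least_i _ lt_ji); rewrite hj (code_eq_sym eij).
Qed.

Lemma is_rep_exists i : code_dom i -> exists2 r, is_rep r & code_eq r i.
Proof.
move=> hi; have ex : exists j, code_dom j && code_eq j i by exists i; rewrite hi code_eq_refl.
case: (ex_minnP ex) => r /andP [hr eri] least; exists r => //.
apply/is_repP; split=> // j lt_jr; apply/negP => /andP [hj ejr].
by have := least j; rewrite hj (code_eq_trans ejr eri) => /(_ isT); lia.
Qed.

Definition rep_threshold := cperiod + 2 * cthreshold.

(* A code [i] beyond the threshold has a smaller equivalent code iff [i + cperiod]
   does, the witnesses corresponding by shifting by [cperiod] (or not at all, for
   witnesses at least [cthreshold] below). *)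
Lemma eperiodic_is_rep : eperiodic is_rep rep_threshold cperiod.
Proof.
have [Pd Pr Pl] := eperiodic2_code_eq; have dom_per := eperiodic_code_dom.
move=> i; rewrite /rep_threshold => le_i.
apply/idP/idP => /is_repP [hi least]; apply/is_repP.
- split; first by rewrite -dom_per //; lia.
  move=> j lt_j; apply/negP => /andP [hj eji].
  case: (ltnP j cthreshold) => lt_jT.
    by apply: (negP (least j _)); [lia | rewrite hj Pr //; lia].
  by apply: (negP (least (j + cperiod) _)); [lia | rewrite dom_per ?Pd ?hj //; lia].
- split; first by rewrite dom_per //; lia.
  move=> j lt_j; apply/negP => /andP [hj eji].
  case: (ltnP j (cperiod + cthreshold)) => lt_jT.
    by apply: (negP (least j _)); [lia | rewrite hj -(Pr j i) //; lia].
  have Ej : j = (j - cperiod) + cperiod by lia.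
  have [le_j' le_Ti] : cthreshold <= j - cperiod /\ cthreshold <= i by lia.
  apply: (negP (least (j - cperiod) _)); first lia.
  by rewrite -(dom_per _ le_j') -(Pd _ _ le_j' le_Ti) -Ej hj.
Qed.

(* Seeds are the residue classes of representatives modulo [seed_gap] beyond
   [rep_threshold]. The gap is a multiple of the period exceeding the threshold,
   so the relation between two seed elements only depends on whether their
   indices are equal, adjacent, or farther apart. *)
Definition seed_gap := cperiod * cthreshold.+1.

Lemma cthreshold_lt_seed_gap : cthreshold < seed_gap.
Proof. by have := cperiod_gt0; rewrite /seed_gap; nia. Qed.

Lemma eperiodic2_code_rel_gap : eperiodic2 code_rel cthreshold seed_gap.
Proof. exact: eperiodic2Mn eperiodic2_code_rel. Qed.

Lemma eperiodic_is_rep_gap : eperiodic is_rep rep_threshold seed_gap.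
Proof. exact: eperiodicMn eperiodic_is_rep. Qed.

Definition seed_residues := [seq r <- iota 0 seed_gap | is_rep (rep_threshold + r)].
Definition nseeds := size seed_residues.
Definition seed_residue (k : 'I_nseeds) := nth 0 seed_residues k.
Definition seed_code (k : 'I_nseeds) m := rep_threshold + seed_residue k + seed_gap * m.

Lemma seed_residue_lt k : seed_residue k < seed_gap.
Proof.
have := mem_nth 0 (ltn_ord k).
by rewrite mem_filter mem_iota => /andP [_ /andP [_ ]].
Qed.

Lemma seed_residue_inj : injective seed_residue.
Proof.
move=> k l /eqP; rewrite nth_uniq ?filter_uniq ?iota_uniq //.
by move/eqP/val_inj.
Qed.

Lemma is_rep_seed_code k m : is_rep (seed_code k m).
Proof.
have := mem_nth 0 (ltn_ord k); rewrite mem_filter => /andP [rep_k _].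
by rewrite /seed_code (eperiodic_shift _ eperiodic_is_rep_gap) ?leq_addr.
Qed.

Lemma seed_code_inj k l m m' : seed_code k m = seed_code l m' -> k = l /\ m = m'.
Proof.
rewrite /seed_code => E.
have ltk := seed_residue_lt k; have ltl := seed_residue_lt l.
have E' : seed_residue k + seed_gap * m = seed_residue l + seed_gap * m' by lia.
have ekl : seed_residue k = seed_residue l.
  have := congr1 (modn^~ seed_gap) E'.
  by rewrite /= !(mulnC seed_gap) !(addnC (seed_residue _)) !modnMDl !modn_small.
by have -> := seed_residue_inj ekl; split=> //; rewrite ekl in E'; nia.
Qed.

Lemma seed_code_shift k m q : seed_code k (m + q) = seed_code k m + seed_gap * q.
Proof. by rewrite /seed_code mulnDr addnA. Qed.

Lemma seed_codeP v : rep_threshold <= v -> is_rep v -> exists k m, seed_code k m = v.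
Proof.
move=> le_v rep_v; have gap_gt0 := leq_ltn_trans (leq0n _) cthreshold_lt_seed_gap.
set r := (v - rep_threshold) %% seed_gap; set m := (v - rep_threshold) %/ seed_gap.
have Ev : v = rep_threshold + r + seed_gap * m.
  by rewrite /r /m; have := divn_eq (v - rep_threshold) seed_gap; lia.
have rep_r : is_rep (rep_threshold + r).
  by rewrite -(eperiodic_shift m eperiodic_is_rep_gap) -?Ev ?leq_addr.
have r_in : r \in seed_residues by rewrite mem_filter rep_r mem_iota /= ltn_pmod.
have lt_r : index r seed_residues < nseeds by rewrite index_mem.
by exists (Ordinal lt_r), m; rewrite /seed_code /seed_residue /= nth_index.
Qed.

Lemma code_rel_seed_shift k l m m' q :
  code_rel (seed_code k (m + q)) (seed_code l (m' + q)) =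
  code_rel (seed_code k m) (seed_code l m').
Proof.
rewrite !seed_code_shift (eperiodic2_diag_shift eperiodic2_code_rel_gap) //;
  have := cthreshold_lt_seed_gap; rewrite /seed_code /rep_threshold; lia.
Qed.

Lemma code_rel_seed_above k l m : 2 <= m ->
  code_rel (seed_code k 0) (seed_code l m) = code_rel (seed_code k 0) (seed_code l 2).
Proof.
move=> le2m; rewrite -(subnKC le2m) seed_code_shift.
rewrite (eperiodic2_right_shift eperiodic2_code_rel_gap) //.
by have := seed_residue_lt k; have := cthreshold_lt_seed_gap; rewrite /seed_code; lia.
Qed.

Lemma code_rel_seed_below k l m : 2 <= m ->
  code_rel (seed_code k m) (seed_code l 0) = code_rel (seed_code k 2) (seed_code l 0).
Proof.
move=> le2m; rewrite -(subnKC le2m) seed_code_shift.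
rewrite (eperiodic2_left_shift eperiodic2_code_rel_gap) //.
by have := seed_residue_lt l; have := cthreshold_lt_seed_gap; rewrite /seed_code; lia.
Qed.

Lemma code_rel_low_seed v k m : v < rep_threshold -> 0 < m ->
  code_rel v (seed_code k m) = code_rel v (seed_code k 1).
Proof.
move=> lt_v lt0m; rewrite -(subnKC lt0m) seed_code_shift.
rewrite (eperiodic2_right_shift eperiodic2_code_rel_gap) //.
by have := cthreshold_lt_seed_gap; rewrite /seed_code; lia.
Qed.

Lemma code_rel_seed_low v k m : v < rep_threshold -> 0 < m ->
  code_rel (seed_code k m) v = code_rel (seed_code k 1) v.
Proof.
move=> lt_v lt0m; rewrite -(subnKC lt0m) seed_code_shift.
rewrite (eperiodic2_left_shift eperiodic2_code_rel_gap) //.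
by have := cthreshold_lt_seed_gap; rewrite /seed_code; lia.
Qed.

Definition seed_bound := rep_threshold + 5 * seed_gap.
Local Notation QR := {i : 'I_seed_bound | is_rep i}.

Definition rep_rho : rel QR := fun a b => code_rel (val (val a)) (val (val b)).

Lemma seed_code_lt k (i : 'I_5) : seed_code k i < seed_bound.
Proof. by have := seed_residue_lt k; have := ltn_ord i; rewrite /seed_code /seed_bound; nia. Qed.

Definition rep_seed k i : QR := exist _ (Ordinal (seed_code_lt k i)) (is_rep_seed_code k i).
Local Notation hatR := (@hat_rho _ rep_rho _ rep_seed).

Lemma code_rel_seed k l m m' :
  code_rel (seed_code k m) (seed_code l m') = hatR (inr (k, m)) (inr (l, m')).
Proof.
case: (ltngtP m m') => [lt_mm'|lt_m'm|<-].
- have -> : code_rel (seed_code k m) (seed_code l m') =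
            code_rel (seed_code k 0) (seed_code l (m' - m)).
    by rewrite -(code_rel_seed_shift k l 0 (m' - m) m) add0n subnK // ltnW.
  case: (eqVneq m' m.+1) => [E|ne].
    by rewrite (hat_rho_succ _ _ _ _ E) E subSnn.
  by rewrite code_rel_seed_above ?(hat_rho_above _ _ _ _ (_ : m.+2 <= m')) //; lia.
- have -> : code_rel (seed_code k m) (seed_code l m') =
            code_rel (seed_code k (m - m')) (seed_code l 0).
    by rewrite -(code_rel_seed_shift k l (m - m') 0 m') add0n subnK // ltnW.
  case: (eqVneq m m'.+1) => [E|ne].
    by rewrite (hat_rho_pred _ _ _ _ (esym E)) E subSnn.
  by rewrite code_rel_seed_below ?(hat_rho_below _ _ _ _ (_ : m'.+2 <= m)) //; lia.
- by rewrite (hat_rho_eq _ _ _ _ (erefl m)) /rep_rho /= -(code_rel_seed_shift k l 0 0 m).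
Qed.

Lemma inQ'_rep_seed (q : QR) : inQ' rep_seed q = (val (val q) < rep_threshold).
Proof.
apply/idP/idP => [Q'q|lt_q].
  rewrite ltnNge; apply/negP => le_q.
  have [k [i Eq]] := seed_codeP le_q (valP q).
  have lt_i5 : i < 5 by have := ltn_ord (val q); rewrite -Eq /seed_code /seed_bound; nia.
  move/forallP: Q'q => /(_ k) /forallP /(_ (Ordinal lt_i5)) /eqP; apply.
  exact/val_inj/val_inj.
apply/forallP => k; apply/forallP => i; apply/eqP => Eq.
by move: lt_q; rewrite -Eq /= /seed_code; lia.
Qed.

Lemma code_rel_Q'_seed (q : QR) k m : inQ' rep_seed q -> 0 < m ->
  code_rel (val (val q)) (seed_code k m) = code_rel (val (val q)) (seed_code k 1).
Proof. by rewrite inQ'_rep_seed => lt_q; apply: code_rel_low_seed. Qed.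

Lemma code_rel_seed_Q' (q : QR) k m : inQ' rep_seed q -> 0 < m ->
  code_rel (seed_code k m) (val (val q)) = code_rel (seed_code k 1) (val (val q)).
Proof. by rewrite inQ'_rep_seed => lt_q; apply: code_rel_seed_low. Qed.

Definition rep_code (a : hatQ rep_seed) : nat :=
  match a with inl q => val (val (val q)) | inr (k, m) => seed_code k m end.

Lemma is_rep_code a : is_rep (rep_code a).
Proof. by case: a => [q|[k m]]; [exact: (valP (val q)) | exact: is_rep_seed_code]. Qed.

Lemma rep_code_Q' q : rep_code (inl q) < rep_threshold.
Proof. by rewrite -inQ'_rep_seed; exact: (valP q). Qed.

Lemma rep_code_inj : injective rep_code.
Proof.
move=> [q|[k m]] [q'|[l m']] E.
- by congr inl; apply/val_inj/val_inj/val_inj.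
- by have := rep_code_Q' q; rewrite E /= /seed_code; lia.
- by have := rep_code_Q' q'; rewrite -E /= /seed_code; lia.
- by have [-> ->] := seed_code_inj E.
Qed.

Lemma rep_codeP v : is_rep v -> exists a, rep_code a = v.
Proof.
move=> rep_v; case: (ltnP v rep_threshold) => [lt_v|le_v].
  have lt_vb : v < seed_bound by rewrite /seed_bound; lia.
  have Q'v : inQ' rep_seed (exist _ (Ordinal lt_vb) rep_v : QR) by rewrite inQ'_rep_seed.
  by exists (inl (exist (fun q : QR => inQ' rep_seed q) _ Q'v)).
by have [k [i E]] := seed_codeP le_v rep_v; exists (inr (k, i)).
Qed.

Definition rep_val (a : hatQ rep_seed) : X := code_val (is_rep_dom (is_rep_code a)).

Lemma rep_val_inj : injective rep_val.
Proof.
move=> a b E; apply/rep_code_inj/is_rep_inj; try exact: is_rep_code.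
exact/(code_eqP (is_rep_dom (is_rep_code a)) (is_rep_dom (is_rep_code b))).
Qed.

Lemma rep_val_surj x : exists a, rep_val a = x.
Proof.
have [[u Lu] <-] := phi_surj x; move: Lu; rewrite (unit_seqE u) => Lu.
have hu := proj1 (AL_L _) Lu; rewrite (phi_code_val Lu hu).
have [r rep_r eru] := is_rep_exists hu.
have [a Ea] := rep_codeP rep_r; exists a.
by rewrite /rep_val (code_val_eq _ (is_rep_dom rep_r) Ea); apply/code_eqP.
Qed.

Lemma rep_val_rel a b : R (rep_val a) (rep_val b) <-> hatR a b.
Proof.
rewrite /rep_val -code_relP.
case: a => [q|[k m]]; case: b => [q'|[l m']] //; last by rewrite -code_rel_seed.
- have := rep_code_Q' q; rewrite /= => lt_q.
  by case: eqP => [->|/eqP ne] //; rewrite code_rel_low_seed ?lt0n.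
- have := rep_code_Q' q'; rewrite /= => lt_q'.
  by case: eqP => [->|/eqP ne] //; rewrite code_rel_seed_low ?lt0n.
Qed.

Lemma rep_rho_seed k l i j :
  rep_rho (rep_seed k i) (rep_seed l j) = hatR (inr (k, i : nat)) (inr (l, j : nat)).
Proof. exact: code_rel_seed. Qed.

Lemma FA_foundational_rep : FA_foundational rep_rho rep_seed.
Proof.
split=> [[k i] [l j] /(congr1 (fun z : QR => val (val z))) /= E|k l].
  by have [-> eij] := seed_code_inj E; congr pair; apply/val_inj.
split; [|split; [|split; [|split; [|split; [|split]]]]].
- by move=> i j; rewrite !rep_rho_seed !(hat_rho_eq _ _ _ _ (erefl _)).
- by move=> i i' j j' Ei Ej;
    rewrite !rep_rho_seed (hat_rho_succ _ _ _ _ Ei) (hat_rho_succ _ _ _ _ Ej).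
- by move=> i i' j j' Ei Ej;
    rewrite !rep_rho_seed (hat_rho_pred _ _ _ _ (esym Ei)) (hat_rho_pred _ _ _ _ (esym Ej)).
- move=> i j i' j' le_ij le_i'j'.
  by rewrite !rep_rho_seed !hat_rho_above // -addn2.
- move=> i j i' j' le_ij le_i'j'.
  by rewrite !rep_rho_seed !hat_rho_below // -addn2.
- by move=> q Q'q i j lt0i lt0j; rewrite /rep_rho /= code_rel_Q'_seed // [RHS]code_rel_Q'_seed.
- by move=> q Q'q i j lt0i lt0j; rewrite /rep_rho /= code_rel_seed_Q' // [RHS]code_rel_seed_Q'.
Qed.

Lemma partial_order_rep_rho : partial_order (fun a b : QR => rep_rho a b).
Proof.
have rep_rhoP (a b : QR) :
    rep_rho a b <-> R (code_val (is_rep_dom (valP a))) (code_val (is_rep_dom (valP b))).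
  exact: code_relP.
case: R_po => [R_refl [R_anti R_trans]]; split; [|split].
- by move=> a; apply/rep_rhoP/R_refl.
- move=> a b /rep_rhoP Rab /rep_rhoP Rba.
  apply/val_inj/val_inj/is_rep_inj; [exact: (valP a) | exact: (valP b) |].
  by apply/(code_eqP (is_rep_dom (valP a)) (is_rep_dom (valP b))); apply: R_anti.
- by move=> a b c /rep_rhoP Rab /rep_rhoP Rbc; apply/rep_rhoP; apply: R_trans Rbc.
Qed.

(* Within a seed, indices two apart relate as adjacent ones do, so a seed is an
   antichain unless its first two elements are comparable. *)
Lemma code_rel_seed_02 k :
  code_rel (seed_code k 0) (seed_code k 2) = code_rel (seed_code k 0) (seed_code k 1).
Proof.
rewrite (seed_code_shift k 1 1) (eperiodic2_right_shift eperiodic2_code_rel_gap) //.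
by have := cthreshold_lt_seed_gap; rewrite /seed_code; lia.
Qed.

Lemma code_rel_seed_20 k :
  code_rel (seed_code k 2) (seed_code k 0) = code_rel (seed_code k 1) (seed_code k 0).
Proof.
rewrite (seed_code_shift k 1 1) (eperiodic2_left_shift eperiodic2_code_rel_gap) //.
by have := cthreshold_lt_seed_gap; rewrite /seed_code; lia.
Qed.

Lemma rep_seed_shape k : seed_antichain rep_rho rep_seed k \/
  seed_ascending rep_rho rep_seed k \/ seed_descending rep_rho rep_seed k.
Proof.
have neq (i i' : 'I_5) : i' = i.+1 :> nat -> rep_seed k i != rep_seed k i'.
  move=> Ei; apply/negP => /eqP /(congr1 (fun z : QR => val (val z))) /= E.
  by have [_] := seed_code_inj E; lia.
case up: (code_rel (seed_code k 0) (seed_code k 1)).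
  by right; left => i i' Ei; rewrite neq // andbT rep_rho_seed (hat_rho_succ _ _ _ _ Ei).
case down: (code_rel (seed_code k 1) (seed_code k 0)).
  right; right => i i' Ei; rewrite eq_sym neq // andbT rep_rho_seed.
  by rewrite (hat_rho_pred _ _ _ _ (esym Ei)).
left => i j ne_ij; rewrite rep_rho_seed.
case: (ltngtP i j) => [lt_ij|lt_ji|/val_inj eij]; last by rewrite eij eqxx in ne_ij.
- case: (eqVneq (j : nat) i.+1) => [Ej|ne].
    by rewrite (hat_rho_succ _ _ _ _ Ej) /rep_rho /= up.
  have le_ij : i.+2 <= j by rewrite ltn_neqAle eq_sym ne lt_ij.
  by rewrite (hat_rho_above _ _ _ _ le_ij) /rep_rho /= code_rel_seed_02 up.
- case: (eqVneq (i : nat) j.+1) => [Ei|ne].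
    by rewrite (hat_rho_pred _ _ _ _ (esym Ei)) /rep_rho /= down.
  have le_ji : j.+2 <= i by rewrite ltn_neqAle eq_sym ne lt_ji.
  by rewrite (hat_rho_below _ _ _ _ le_ji) /rep_rho /= code_rel_seed_20 down.
Qed.

Lemma propagation_of_presentation : exists (Q : finType) (rho : rel Q) (n : nat)
    (p : 'I_n -> 'I_5 -> Q),
  FA_foundational rho p /\ partial_order (fun a b : Q => rho a b) /\
  (forall k : 'I_n,
     seed_antichain rho p k \/ seed_ascending rho p k \/ seed_descending rho p k) /\
  exists f : X -> hatQ p, bijective f /\ forall x y, R x y <-> @hat_rho Q rho n p (f x) (f y).
Proof.
exists QR, rep_rho, nseeds, rep_seed.
split; [exact: FA_foundational_rep | split; [exact: partial_order_rep_rho | split]].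
  exact: rep_seed_shape.
pose f x := proj1_sig (constructive_indefinite_description _ (rep_val_surj x)).
have fK x : rep_val (f x) = x by rewrite /f; case: constructive_indefinite_description.
exists f; split; first by exists rep_val => // a; apply: rep_val_inj; rewrite fK.
by move=> x y; rewrite -rep_val_rel !fK.
Qed.
End Presentation.

Theorem theorem5p10 (X : Type) (R : X -> X -> Prop) :
  partial_order R ->
  (unary_FA_presentable R <->
   exists (Q : finType) (rho : rel Q) (n : nat) (p : 'I_n -> 'I_5 -> Q),
     FA_foundational rho p /\
     partial_order (fun a b : Q => rho a b) /\
     (forall k : 'I_n,
        seed_antichain rho p k \/ seed_ascending rho p k \/ seed_descending rho p k) /\
     exists f : X -> hatQ p,
       bijective f /\ forall x y, R x y <-> @hat_rho Q rho n p (f x) (f y)).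
Proof.
move=> R_po; split=> [[L [phi [[AL AL_L] [phi_surj [reg_eq reg_R]]]]]|].
  have [AE AE_eq] := regular2_accept2 reg_eq.
  have [AR AR_R] := regular2_accept2 reg_R.
  exact: (propagation_of_presentation R_po phi_surj (fun i => AL_L (nseq i tt)) AE_eq AR_R).
move=> [Q [rho [n [p [_ [_ [_ [f [bij_f Rf]]]]]]]]].
exact: unary_FA_presentable_propagation bij_f Rf.
Qed.
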